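(* Let $R$ be a von Neumann regular ring. (1) A finitely generated $R$-module has a pure-composition series with indecomposable cyclic factors if and only if it is semisimple. (2) Every finitely generated $R$-module has a pure-composition series with indecomposable cyclic factors if and only if $R$ is a semisimple ring.
   Context: All rings are commutative with identity. A pure-composition series of $M$ is a finite chain $\{0\}=M_0\subset\dots\subset M_n=M$ of pure submodules (inclusion stays injective after tensoring with any module); its factors are $M_i/M_{i-1}$. *)

From HB Require Import structures.
From mathcomp Require Import all_boot all_order all_algebra.
Set Implicit Arguments. Unset Strict Implicit. Unset Printing Implicit Defensive.
Import Order.TTheory GRing.Theory Num.Theory.
Local Open Scope ring_scope.

Definition vN_regular (R : comPzRingType) : Prop :=
  forall a : R, exists x : R, a = a * x * a.

Section Mods.
Variable R : comPzRingType.

Definition submodule (M : lmodType R) (S : M -> Prop) : Prop :=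
  [/\ S 0, (forall x y, S x -> S y -> S (x + y)) &
      (forall (r : R) x, S x -> S (r *: x))].

Definition fin_gen (M : lmodType R) : Prop :=
  exists g : seq M, forall m : M,
    exists c : seq R, size c = size g /\
      m = \sum_(i < size g) c`_i *: g`_i.

Definition bilinear_on (M N P : lmodType R) (A : M -> Prop)
    (beta : M -> N -> P) : Prop :=
  [/\ (forall a a' n, A a -> A a' -> beta (a + a') n = beta a n + beta a' n),
      (forall (r : R) a n, A a -> beta (r *: a) n = r *: beta a n),
      (forall a n n', A a -> beta a (n + n') = beta a n + beta a n') &
      (forall (r : R) a n, A a -> beta a (r *: n) = r *: beta a n)].

(* The element  sum_i a_i (x) n_i  of  A (x)_R N  is zero, where A is a
   submodule of M; by the universal property of the tensor product this
   holds iff every R-bilinear map on A x N kills the sum. *)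
Definition tensor_zero (M N : lmodType R) (A : M -> Prop) (s : seq (M * N))
  : Prop :=
  forall (P : lmodType R) (beta : M -> N -> P), bilinear_on A beta ->
    \sum_(p <- s) beta p.1 p.2 = 0.

(* A pure in M: for every module N, the map A (x) N -> M (x) N is injective,
   i.e. any element of A (x) N (all of the form sum a_i (x) n_i with a_i in A)
   which vanishes in M (x) N already vanishes in A (x) N. *)
Definition pure_sub (M : lmodType R) (A : M -> Prop) : Prop :=
  submodule A /\
  forall (N : lmodType R) (s : seq (M * N)),
    (forall p, p \in s -> A p.1) ->
    tensor_zero (fun _ : M => True) s -> tensor_zero A s.

Definition factor_cyclic (M : lmodType R) (B C : M -> Prop) : Prop :=
  exists m : M, C m /\
    forall x, C x <-> exists (r : R) (y : M), B y /\ x = r *: m + y.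

(* Submodules of C/B are
   described (correspondence theorem) as submodules D with B <= D <= C. *)
Definition factor_indecomposable (M : lmodType R) (B C : M -> Prop) : Prop :=
  (exists x, C x /\ ~ B x) /\
  ~ exists D E : M -> Prop,
      [/\ submodule D /\ submodule E,
          ((forall x, B x -> D x) /\ (forall x, D x -> C x)) /\
          ((forall x, B x -> E x) /\ (forall x, E x -> C x)),
          (forall x, C x -> exists d e, [/\ D d, E e & x = d + e]),
          (forall x, D x -> E x -> B x) &
          (exists x, D x /\ ~ B x) /\ (exists x, E x /\ ~ B x)].

Definition has_pure_comp_series_indec_cyclic (M : lmodType R) : Prop :=
  exists (n : nat) (S : nat -> M -> Prop),
    [/\ (forall x, S 0%N x <-> x = 0),
        (forall x, S n x),
        (forall i, (i <= n)%N -> pure_sub (S i)),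
        (forall i, (i < n)%N -> forall x, S i x -> S i.+1 x) &
        (forall i, (i < n)%N ->
           factor_cyclic (S i) (S i.+1) /\ factor_indecomposable (S i) (S i.+1))].

Definition semisimple_mod (M : lmodType R) : Prop :=
  forall A : M -> Prop, submodule A ->
    exists B : M -> Prop, [/\ submodule B,
      (forall x, exists a b, [/\ A a, B b & x = a + b]) &
      (forall x, A x -> B x -> x = 0)].

End Mods.

Definition semisimple_ring (R : comPzRingType) : Prop := semisimple_mod (R^o).

From HB Require Import structures.
From mathcomp Require Import all_boot all_order all_algebra.
From mathcomp Require Import ring.
From Stdlib Require Import Classical ClassicalEpsilon FunctionalExtensionality PropExtensionality.
Set Implicit Arguments. Unset Strict Implicit. Unset Printing Implicit Defensive.
Import GRing.Theory.
Local Open Scope ring_scope.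

(* Over a von Neumann regular ring, a cyclic factor (B + R d) / B is indecomposable
   iff it is simple: for r outside its annihilator, the idempotent e = r z splits it
   as (B + R e d) + (B + R (1 - e) d).  So a pure-composition series with
   indecomposable cyclic factors is a chain B_0 = 0, B_(i+1) = B_i + R d_i with simple
   factors.  Such a chain is semisimple by induction: B_i ∩ R d_i is a direct summand
   of the finitely generated B_i, hence finitely generated, so regularity yields one
   e with e d_i in B_i acting as the identity on it; then d_i - e d_i meets B_i
   trivially and spans a simple complement.  Conversely, a finitely generated semisimple module is
   Noetherian, hence has such a chain, and all its submodules are direct summands,
   hence pure.  For (2), a chain of simple factors of a semisimple R, multiplied by
   the generators of M, gives a chain of M with simple or zero factors, so M is
   semisimple; and R itself is finitely generated. *)


Lemma predext {T : Type} (A B : T -> Prop) : (forall x, A x <-> B x) -> A = B.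
Proof.
by move=> AB; apply: functional_extensionality => x; apply: propositional_extensionality.
Qed.

Lemma not_acc_descending (T : Type) (rel : T -> T -> Prop) (a : T) :
  ~ Acc rel a -> exists f : nat -> T, f 0%N = a /\ forall n, rel (f n.+1) (f n).
Proof.
move=> not_acc_a.
have step x : ~ Acc rel x -> exists y, rel y x /\ ~ Acc rel y.
  move=> not_acc_x; apply: NNPP => no_y; apply: not_acc_x; constructor => y rel_yx.
  by apply: NNPP => not_acc_y; apply: no_y; exists y.
pose next x := epsilon (inhabits a) (fun y => rel y x /\ ~ Acc rel y).
have nextP x : ~ Acc rel x -> rel (next x) x /\ ~ Acc rel (next x).
  by move=> /step; apply: epsilon_spec.
have not_acc_iter n : ~ Acc rel (iter n next a).
  by elim: n => [|n IHn] //=; case: (nextP _ IHn).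
by exists (fun n => iter n next a); split => // n; case: (nextP _ (not_acc_iter n)).
Qed.

Lemma acc_maximal (T : Type) (rel : T -> T -> Prop) (F : T -> Prop) (a : T) :
  Acc rel a -> F a -> exists k, F k /\ forall k', F k' -> ~ rel k' k.
Proof.
elim=> {}a _ IHa Fa.
have [[k' [Fk' rel_k'a]]|no_k'] := classic (exists k', F k' /\ rel k' a).
  exact: IHa rel_k'a Fk'.
by exists a; split => // k' Fk' rel_k'a; apply: no_k'; exists k'.
Qed.

Section Submodules.
Variables (R : comPzRingType) (M : lmodType R).
Implicit Types (B S : M -> Prop) (c g : seq M).

Definition incl A B := forall x, A x -> B x.

Definition null : M -> Prop := fun x => x = 0.

Definition add_line B (d : M) : M -> Prop :=
  fun x => exists (r : R) (y : M), B y /\ x = r *: d + y.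

Fixpoint add_lines B c : M -> Prop :=
  if c is d :: c' then add_lines (add_line B d) c' else B.

Definition span c := add_lines null c.

Section SubmoduleClosure.
Variables (S : M -> Prop) (subS : submodule S).

Lemma submodule0 : S 0. Proof. by case: subS. Qed.

Lemma submoduleD x y : S x -> S y -> S (x + y). Proof. by case: subS => _ + _; apply. Qed.

Lemma submoduleZ (r : R) x : S x -> S (r *: x). Proof. by case: subS => _ _; apply. Qed.

Lemma submoduleN x : S x -> S (- x). Proof. by rewrite -scaleN1r; apply: submoduleZ. Qed.

Lemma submoduleB x y : S x -> S y -> S (x - y).
Proof. by move=> Sx Sy; apply: submoduleD Sx (submoduleN Sy). Qed.

End SubmoduleClosure.

Lemma submodule_full : submodule (fun _ : M => True).
Proof. by []. Qed.

Lemma submodule_null : submodule (null : M -> Prop).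
Proof.
split=> [//|x y -> ->|r x ->]; [exact: addr0 | exact: scaler0].
Qed.

Lemma submodule_add_line B d : submodule B -> submodule (add_line B d).
Proof.
move=> subB; split.
- by exists 0, 0; rewrite scale0r addr0; split => //; apply: submodule0.
- move=> _ _ [r [x [Bx ->]]] [s [y [By ->]]].
  exists (r + s), (x + y); split; first exact: submoduleD.
  by rewrite scalerDl addrACA.
- move=> s _ [r [x [Bx ->]]]; exists (s * r), (s *: x); split; first exact: submoduleZ.
  by rewrite scalerDr scalerA.
Qed.

Lemma add_line_incl B d : incl B (add_line B d).
Proof. by move=> y By; exists 0, y; rewrite scale0r add0r. Qed.

Lemma add_line_mem B d : submodule B -> add_line B d d.
Proof. by move=> subB; exists 1, 0; rewrite scale1r addr0; split => //; apply: submodule0. Qed.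

Lemma add_line_min B S d : submodule S -> incl B S -> S d -> incl (add_line B d) S.
Proof.
by move=> subS BS Sd _ [r [y [By ->]]]; apply: submoduleD (submoduleZ _ _ Sd) (BS _ By).
Qed.

Lemma add_line_mono B B' d : incl B B' -> incl (add_line B d) (add_line B' d).
Proof. by move=> BB' _ [r [y [By ->]]]; exists r, y; split => //; apply: BB'. Qed.

Lemma add_line_shift B d d' : submodule B -> B (d - d') -> add_line B d = add_line B d'.
Proof.
move=> subB Bdd'; apply: predext => x; split=> -[r [y [By ->]]].
- exists r, (r *: (d - d') + y); split; first by apply: submoduleD => //; apply: submoduleZ.
  by rewrite scalerBr addrA (addrC (r *: d')) subrK.
- exists r, (y - r *: (d - d')); split; first by apply: submoduleB => //; apply: submoduleZ.
  by rewrite scalerBr opprB [RHS]addrCA [r *: d + _]addrC subrK addrC.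
Qed.

Lemma submodule_add_lines B c : submodule B -> submodule (add_lines B c).
Proof. by elim: c B => [|d c IHc] B subB //=; apply/IHc/submodule_add_line. Qed.

Lemma submodule_span c : submodule (span c).
Proof. exact/submodule_add_lines/submodule_null. Qed.

Lemma add_lines_incl B c : incl B (add_lines B c).
Proof. by elim: c B => [|d c IHc] B //= x Bx; apply: IHc; apply: add_line_incl. Qed.

Lemma add_lines_cat B c1 c2 : add_lines B (c1 ++ c2) = add_lines (add_lines B c1) c2.
Proof. by elim: c1 B => [|d c IHc] B //=. Qed.

Lemma add_lines_rcons B c d : add_lines B (rcons c d) = add_line (add_lines B c) d.
Proof. by rewrite -cats1 add_lines_cat. Qed.

Lemma add_lines_mem B c d : submodule B -> d \in c -> add_lines B c d.
Proof.
elim: c B => [|e c IHc] B subB //=; rewrite inE => /predU1P [->|cd].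
  exact/add_lines_incl/add_line_mem.
exact/IHc/cd/submodule_add_line.
Qed.

Lemma add_lines_min B S c :
  submodule S -> incl B S -> (forall d, d \in c -> S d) -> incl (add_lines B c) S.
Proof.
move=> subS; elim: c B => [|e c IHc] B BS cS //=; apply: IHc.
  by apply: add_line_min => //; apply/cS/mem_head.
by move=> d cd; apply: cS; rewrite inE cd orbT.
Qed.

Lemma span_mem c d : d \in c -> span c d.
Proof. by apply: add_lines_mem; apply: submodule_null. Qed.

Lemma span_min S c : submodule S -> (forall d, d \in c -> S d) -> incl (span c) S.
Proof. by move=> subS; apply: add_lines_min => // _ ->; apply: submodule0. Qed.

Lemma fin_gen_span : fin_gen M -> exists g, forall x, span g x.
Proof.
move=> [g gP]; exists g => x; have [cf [_ ->]] := gP x.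
have subg := submodule_span g.
apply: (big_ind (span g)); [exact: submodule0 subg | exact: submoduleD subg |].
move=> i _; apply: submoduleZ (submodule_span g) _ _ _.
by apply: add_lines_mem; [exact: submodule_null | exact: mem_nth].
Qed.

End Submodules.

Arguments null {R M}.

Section Steps.
Variables (R : comPzRingType) (M : lmodType R).
Implicit Types (B X : M -> Prop) (c : seq M) (d : M).

(* For an ideal [I] this says that [I] is maximal or [I = R]. *)
Definition maximal_or_full (I : R -> Prop) := forall r, ~ I r -> exists s, I (1 - s * r).

(* [(B + R d) / B] is isomorphic to [R / ann_mod B d]. *)
Definition ann_mod B d : R -> Prop := fun r => B (r *: d).

Definition simple_or_zero_step B d := maximal_or_full (ann_mod B d).

Definition simple_step B d := ~ B d /\ simple_or_zero_step B d.

Fixpoint steps (P : (M -> Prop) -> M -> Prop) B c : Prop :=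
  if c is d :: c' then P B d /\ steps P (add_line B d) c' else True.

Lemma ann_mod_shift B d d' : submodule B -> B (d - d') -> ann_mod B d = ann_mod B d'.
Proof.
move=> subB Bdd'; apply: predext => r; rewrite /ann_mod.
have Brdd' : B (r *: (d - d')) by apply: submoduleZ.
rewrite -[r *: d](subrK (r *: d')) -scalerBr.
split => [Brd|Brd']; last exact: submoduleD.
by rewrite -[r *: d'](addKr (r *: (d - d'))); apply: submoduleD => //; apply: submoduleN.
Qed.

Lemma steps_cat P B c1 c2 :
  steps P B (c1 ++ c2) <-> steps P B c1 /\ steps P (add_lines B c1) c2.
Proof. by elim: c1 B => [|d c IHc] B /=; [tauto | rewrite IHc; tauto]. Qed.

Lemma steps_rcons P B c d : steps P B (rcons c d) <-> steps P B c /\ P (add_lines B c) d.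
Proof. by rewrite -cats1 steps_cat /=; tauto. Qed.

Lemma steps_impl (P Q : (M -> Prop) -> M -> Prop) B c :
  (forall B d, P B d -> Q B d) -> steps P B c -> steps Q B c.
Proof. by move=> PQ; elim: c B => [|d c IHc] B //= [/PQ Qd /IHc]. Qed.

Lemma simple_step_generated B X d x : submodule B -> submodule X -> simple_step B d ->
  incl B X -> incl X (add_line B d) -> X x -> ~ B x -> X d.
Proof.
move=> subB subX [_ maxd] BX Xd Xx Bx; have [r [y [By def_x]]] := Xd x Xx.
have [|s Bsrd] := maxd r.
  by move=> Brd; apply: Bx; rewrite def_x; apply: submoduleD.
have -> : d = s *: (x - y) + (1 - s * r) *: d.
  by rewrite def_x addrK scalerA scalerBl scale1r addrC subrK.
apply: submoduleD => //; last exact: BX.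
by apply: submoduleZ => //; apply: submoduleB => //; exact: BX.
Qed.

Lemma simple_step_indecomposable B d : submodule B -> simple_step B d ->
  factor_indecomposable B (add_line B d).
Proof.
move=> subB simple_d; split; first by exists d; split; [exact: add_line_mem | case: simple_d].
move=> [D [E [[subD subE] [[BD Dd] [BE Ed]] _ DEB [[x [Dx Bx]] [y [Ey By]]]]]].
have [Bd _] := simple_d; apply: Bd (DEB _ _ _).
- exact: simple_step_generated Dx Bx.
- exact: simple_step_generated Ey By.
Qed.

Lemma idempotent_split B d (e : R) : submodule B -> e * e = e ->
  (forall x, add_line B d x -> exists u v,
     [/\ add_line B (e *: d) u, add_line B ((1 - e) *: d) v & x = u + v]) /\
  (forall x, add_line B (e *: d) x -> add_line B ((1 - e) *: d) x -> B x).
Proof.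
move=> subB ee; split.
  move=> _ [t [y [By ->]]]; exists (t *: (e *: d) + y), (t *: ((1 - e) *: d)); split.
  - by exists t, y.
  - by exists t, 0; rewrite addr0; split => //; apply: submodule0.
  by rewrite !scalerA addrAC -scalerDl mulrBr mulr1 [t * e + _]addrC subrK.
move=> x [t [y [By def_x]]] [u [y' [By' def_x']]].
have := congr1 (fun v => e *: v) def_x'; rewrite def_x /= !scalerDr !scalerA.
have -> : e * t * e = t * e by rewrite -mulrA mulrCA ee.
have -> : e * u * (1 - e) = 0 by rewrite -mulrA mulrCA mulrBr mulr1 ee subrr mulr0.
rewrite scale0r add0r => /(canRL (addrK _)) ->.
by apply: submoduleD => //; apply: submoduleB => //; apply: submoduleZ.
Qed.

Lemma indecomposable_simple_step B d : vN_regular R -> submodule B ->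
  factor_indecomposable B (add_line B d) -> simple_step B d.
Proof.
move=> regR subB [[x [[t [y [By ->]]] Bx]] indec].
have Bd : ~ B d by move=> Bd; apply: Bx; apply: submoduleD => //; exact: submoduleZ.
split=> // r Brd; have [z rzr] := regR r; set e := r * z.
have ee : e * e = e by rewrite /e mulrA -rzr.
have [cover meet] := idempotent_split d subB ee.
have line_incl (a : R) : incl (add_line B (a *: d)) (add_line B d).
  by apply: add_line_min; [exact: submodule_add_line | exact: add_line_incl |
                           apply: submoduleZ; [exact: submodule_add_line | exact: add_line_mem]].
have [Bed|B1ed] : B (e *: d) \/ B ((1 - e) *: d).
  apply: NNPP => /not_or_and [Bed B1ed]; apply: indec.
  exists (add_line B (e *: d)), (add_line B ((1 - e) *: d)); split => //.
  - by split; apply: submodule_add_line.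
  - by split; split; [exact: add_line_incl | exact: line_incl |
                       exact: add_line_incl | exact: line_incl].
  - by split; [exists (e *: d) | exists ((1 - e) *: d)]; split=> //; apply: add_line_mem.
- by case: Brd; rewrite /ann_mod [X in X *: d]rzr -/e mulrC -scalerA; apply: submoduleZ.
- by exists z; rewrite mulrC -/e.
Qed.

End Steps.

Arguments simple_step {R M}.
Arguments simple_or_zero_step {R M}.

Section Complements.
Variables (R : comPzRingType) (M : lmodType R).
Implicit Types (A C N X : M -> Prop) (g : seq M).

Definition sum_sub A C : M -> Prop := fun x => exists a c, [/\ A a, C c & x = a + c].

Definition complement_in X A C :=
  [/\ submodule C, incl C X, incl X (sum_sub A C) & forall x, A x -> C x -> x = 0].

Definition semisimple_in X :=
  forall A, submodule A -> incl A X -> exists C, complement_in X A C.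

Lemma submodule_sum A C : submodule A -> submodule C -> submodule (sum_sub A C).
Proof.
move=> subA subC; split.
- by exists 0, 0; rewrite addr0; split => //; apply: submodule0.
- move=> _ _ [a [c [Aa Cc ->]]] [a' [c' [Aa' Cc' ->]]].
  by exists (a + a'), (c + c'); rewrite addrACA; split => //; apply: submoduleD.
- move=> r _ [a [c [Aa Cc ->]]].
  by exists (r *: a), (r *: c); rewrite scalerDr; split => //; apply: submoduleZ.
Qed.

Lemma submodule_meet A C : submodule A -> submodule C -> submodule (fun x => A x /\ C x).
Proof.
move=> subA subC; split.
- by split; apply: submodule0.
- by move=> x y [Ax Cx] [Ay Cy]; split; apply: submoduleD.
- by move=> r x [Ax Cx]; split; apply: submoduleZ.
Qed.

Lemma semisimple_in_null : semisimple_in null.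
Proof.
move=> A subA Anull; exists null; split => //; first exact: submodule_null.
by move=> _ ->; exists 0, 0; rewrite addr0; split => //; apply: submodule0.
Qed.

Lemma semisimple_mod_in X : semisimple_mod M -> submodule X -> semisimple_in X.
Proof.
move=> ssM subX A subA AX; have [C [subC cover meet]] := ssM A subA.
exists (fun x => C x /\ X x); split; first exact: submodule_meet.
- by move=> x [].
- move=> x Xx; have [a [c [Aa Cc def_x]]] := cover x.
  exists a, c; split => //; split => //.
  have -> : c = x - a by rewrite def_x addrC addKr.
  by apply: submoduleB => //; apply: AX.
- by move=> x Ax [Cx _]; apply: meet.
Qed.

Lemma semisimple_in_full X : (forall x, X x) -> semisimple_in X -> semisimple_mod M.
Proof.
move=> Xall ssX A subA; have [C [subC _ cover meet]] := ssX A subA (fun x _ => Xall x).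
by exists C; split => // x; apply: cover.
Qed.

Lemma complement_projection X A C : complement_in X A C ->
  exists pi : M -> M, forall x, X x -> A (pi x) /\ C (x - pi x).
Proof.
move=> [_ _ cover _]; exists (fun x => epsilon (inhabits 0) (fun a => A a /\ C (x - a))).
move=> x /cover [a [c [Aa Cc def_x]]].
apply: (epsilon_spec (inhabits 0) (fun a => A a /\ C (x - a))).
by exists a; rewrite def_x addrC addKr.
Qed.

Lemma summand_span X A C g : submodule A -> incl A X -> complement_in X A C ->
  (forall x, X x <-> span g x) -> exists p, forall x, A x <-> span p x.
Proof.
move=> subA AX complC Xg; have [subC _ _ meet] := complC.
have [pi piP] := complement_projection complC.
have Xg_mem h : h \in g -> X h by move=> gh; apply/(Xg h)/span_mem.
have piA : incl (span (map pi g)) A.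
  by apply: span_min => // _ /mapP [h /Xg_mem /piP [Apih _] ->].
have gen_sum : incl (span g) (sum_sub (span (map pi g)) C).
  apply: span_min; first exact: submodule_sum (submodule_span _) subC.
  move=> h gh; exists (pi h), (h - pi h); split; last by rewrite addrC subrK.
    exact/span_mem/map_f.
  by case: (piP h (Xg_mem h gh)).
exists (map pi g) => x; split => [Ax|]; last exact: piA.
have [y [z [py Cz def_x]]] := gen_sum x ((Xg x).1 (AX x Ax)).
rewrite def_x; have -> : z = 0.
  apply: meet => //; have -> : z = x - y by rewrite def_x addrC addKr.
  by apply: submoduleB => //; apply: piA.
by rewrite addr0.
Qed.

Lemma semisimple_in_add_line A d : submodule A -> semisimple_in A ->
  (forall r, A (r *: d) -> r *: d = 0) -> simple_or_zero_step A d ->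
  semisimple_in (add_line A d).
Proof.
move=> subA ssA Ad0 maxd N subN NAd.
have [[x0 [Nx0 Ax0]]|NA] := classic (exists x, N x /\ ~ A x); last first.
  have {}NA : incl N A by move=> x Nx; apply: NNPP => Ax; apply: NA; exists x.
  have [C [subC CA cover meet]] := ssA N subN NA.
  exists (add_line C d); split; [exact: submodule_add_line | exact: add_line_mono |..].
    move=> _ [r [a [Aa ->]]]; have [n [c [Nn Cc ->]]] := cover a Aa.
    by exists n, (r *: d + c); rewrite addrCA; split => //; exists r, c.
  move=> x Nx [r [c [Cc def_x]]]; have rd0 : r *: d = 0.
    apply: Ad0; have -> : r *: d = x - c by rewrite def_x addrK.
    by apply: submoduleB => //; [exact: NA | exact: CA].
  by apply: meet => //; rewrite def_x rd0 add0r.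
(* [d] lies in [N + A] because [R d] is simple and [N] meets it outside [A]. *)
have [r0 [a0 [Aa0 def_x0]]] := NAd x0 Nx0.
have [s Asr0d] : exists s, A ((1 - s * r0) *: d).
  apply: maxd => Ar0d; apply: Ax0; rewrite def_x0; exact: submoduleD.
have def_d : d = s *: (x0 - a0).
  move: (Ad0 _ Asr0d); rewrite scalerBl scale1r => /eqP; rewrite subr_eq0 => /eqP ->.
  by rewrite def_x0 addrK scalerA.
have [C [subC CA cover meet]] := ssA _ (submodule_meet subN subA) (fun x => @proj2 _ _).
exists C; split => //.
- by move=> x /CA; apply: add_line_incl.
- move=> _ [r [a [Aa ->]]].
  have [|n [c [[Nn _] Cc def_a]]] := cover (a - (r * s) *: a0).
    by apply: submoduleB => //; apply: submoduleZ.
  exists ((r * s) *: x0 + n), c; split => //; first by apply: submoduleD => //; apply: submoduleZ.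
  by rewrite -addrA -def_a def_d scalerA scalerBr addrAC addrA.
- by move=> x Nx Cx; apply: meet => //; split => //; apply: CA.
Qed.

End Complements.

Section RegularRing.
Variable R : comPzRingType.
Hypothesis regR : vN_regular R.

Lemma regular_unit_extend (I : R^o -> Prop) (e r : R) : submodule I -> I e -> I r ->
  exists f : R, I f /\ (e + f - e * f) * r = r.
Proof.
move=> subI Ie Ir; set r' := r - r * e; have [z r'zr'] := regR r'.
exists (z * r'); split; first exact (submoduleZ subI z (submoduleB subI Ir (submoduleZ subI r Ie))).
have -> : (e + z * r' - e * (z * r')) * r = e * r + r' * z * r' by rewrite /r'; ring.
by rewrite -r'zr' /r'; ring.
Qed.

Variable M : lmodType R.
Implicit Types (A : M -> Prop) (c p : seq M) (d : M).

Lemma submodule_ann_mod A d : submodule A -> submodule (ann_mod A d : R^o -> Prop).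
Proof.
move=> subA; rewrite /ann_mod; split.
- by rewrite scale0r; apply: submodule0.
- by move=> r s Ar As; rewrite scalerDl; apply: submoduleD.
- by move=> r s As; rewrite -scalerA; apply: submoduleZ.
Qed.

Lemma regular_line_unit A d p : submodule A ->
  (forall q, q \in p -> exists r, A (r *: d) /\ q = r *: d) ->
  exists e, A (e *: d) /\ forall q, q \in p -> e *: q = q.
Proof.
move=> subA; elim: p => [|q p IHp] pAd.
  by exists 0; rewrite scale0r; split => //; apply: submodule0.
have [|e [Aed eP]] := IHp; first by move=> q' pq'; apply: pAd; rewrite inE pq' orbT.
have [r [Ard ->]] := pAd q (mem_head _ _).
have subI := submodule_ann_mod d subA.
have [f [Af efr]] := regular_unit_extend subI Aed Ard.
exists (e + f - e * f); split.
  exact (submoduleB subI (submoduleD subI Aed Af) (submoduleZ subI e Af)).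
move=> q'; rewrite inE => /predU1P [->|pq']; first by rewrite scalerA efr.
by rewrite scalerBl scalerDl mulrC -scalerA eP // addrK.
Qed.

Lemma regular_line_complement c d : semisimple_in (span c) ->
  exists d', span c (d - d') /\ forall r, span c (r *: d') -> r *: d' = 0.
Proof.
move=> ssA; set A := span c; have subA : submodule A := submodule_span c.
pose Im x := exists r, A (r *: d) /\ x = r *: d.
have subIm : submodule Im.
  split.
  - by exists 0; rewrite scale0r; split => //; apply: submodule0.
  - move=> _ _ [r [Ar ->]] [s [As ->]].
    by exists (r + s); rewrite scalerDl; split => //; apply: submoduleD.
  - by move=> t _ [r [Ar ->]]; exists (t * r); rewrite -scalerA; split => //; apply: submoduleZ.
have ImA : incl Im A by move=> _ [r [Ar ->]].
have [C complC] := ssA Im subIm ImA.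
have [p pP] := summand_span subIm ImA complC (fun x => iff_refl (A x)).
have [e [Aed eP]] := regular_line_unit subA (fun q pq => (pP q).2 (span_mem pq)).
have Im_fixed : incl Im (fun y => e *: y = y).
  have fixed_sub : submodule (fun y : M => e *: y = y).
    split=> [|x y ex ey|r x ex]; first exact: scaler0.
      by rewrite scalerDr ex ey.
    by rewrite scalerA mulrC -scalerA ex.
  by move=> y /pP py; exact: (span_min fixed_sub eP py).
exists (d - e *: d); split; first by rewrite opprB addrC subrK.
move=> r Ard'; have Ard : A (r *: d).
  have -> : r *: d = r *: (d - e *: d) + r *: (e *: d) by rewrite scalerBr subrK.
  by apply: submoduleD => //; apply: submoduleZ.
have := Im_fixed _ (ex_intro _ r (conj Ard erefl)).
by rewrite scalerBr scalerA mulrC -scalerA => ->; rewrite subrr.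
Qed.

Lemma semisimple_in_step c d : semisimple_in (span c) ->
  simple_or_zero_step (span c) d -> semisimple_in (span (rcons c d)).
Proof.
move=> ssA maxd; have subA := submodule_span c.
have [d' [Add' Ad'0]] := regular_line_complement d ssA.
rewrite /span add_lines_rcons (add_line_shift subA Add').
by apply: semisimple_in_add_line => //; rewrite /simple_or_zero_step -(ann_mod_shift subA Add').
Qed.

Lemma steps_semisimple c : steps simple_or_zero_step null c -> semisimple_in (span c).
Proof.
elim/last_ind: c => [|c d IHc]; first by move=> _; apply: semisimple_in_null.
by move=> /steps_rcons [/IHc ssc maxd]; apply: semisimple_in_step.
Qed.

End RegularRing.

Section Noetherian.
Variables (R : comPzRingType) (M : lmodType R).
Implicit Types (B : M -> Prop).

Definition noetherian := forall B, submodule B -> exists p, forall x, B x <-> span p x.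

Definition proper_ext B' B := [/\ submodule B', incl B B' & exists x, B' x /\ ~ B x].

Hypothesis noethM : noetherian.

Lemma noetherian_stationary (f : nat -> M -> Prop) :
  (forall n, submodule (f n)) -> (forall n, incl (f n) (f n.+1)) ->
  exists n, incl (f n.+1) (f n).
Proof.
move=> subf incf; have monof m n : (m <= n)%N -> incl (f m) (f n).
  move=> /subnK <-; elim: (n - m)%N => [|k IHk] //= x fmx.
  by rewrite addSn; apply/incf/IHk.
pose U x := exists n, f n x.
have subU : submodule U.
  split; first by exists 0%N; apply: submodule0.
  - move=> x y [m fmx] [n fny]; exists (maxn m n).
    apply: (submoduleD (subf _)); first exact: monof (leq_maxl m n) x fmx.
    exact: monof (leq_maxr m n) y fny.
  - by move=> r x [n fnx]; exists n; apply: submoduleZ.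
have [p pP] := noethM subU.
have pU q : q \in p -> U q by move=> pq; apply/pP/span_mem.
have [n pn] : exists n, forall q, q \in p -> f n q.
  elim: p {pP} pU => [|q p IHp] pU; first by exists 0%N.
  have [|n pn] := IHp; first by move=> q' pq'; apply: pU; rewrite inE pq' orbT.
  have [m fmq] := pU q (mem_head _ _).
  exists (maxn m n) => q'; rewrite inE => /predU1P [->|/pn fnq'].
    exact: monof (leq_maxl m n) q fmq.
  exact: monof (leq_maxr m n) q' fnq'.
exists n => x fx; apply: (span_min (subf n) pn); apply/pP.
by exists n.+1.
Qed.

Lemma noetherian_acc B : submodule B -> Acc proper_ext B.
Proof.
move=> subB; apply: NNPP => not_acc.
have [f [f0 fP]] := not_acc_descending not_acc.
have subf n : submodule (f n) by case: n => [|n]; [rewrite f0 | case: (fP n)].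
have [n fn] := noetherian_stationary subf (fun n => let: And3 _ inc _ := fP n in inc).
by have [_ _ [x [fx notfx]]] := fP n; apply/notfx/fn.
Qed.

End Noetherian.

Section SemisimpleModules.
Variables (R : comPzRingType) (M : lmodType R).
Hypothesis ssM : semisimple_mod M.
Implicit Types (A B C T : M -> Prop) (g : seq M).

Lemma semisimple_complement A : submodule A -> exists C, complement_in (fun _ => True) A C.
Proof.
move=> subA; have [C [subC cover meet]] := ssM subA.
by exists C; split => // x _; apply: cover.
Qed.

Lemma summand_projection A C : submodule A -> complement_in (fun _ => True) A C ->
  exists pi : M -> M, [/\ forall x, A (pi x), forall a, A a -> pi a = a,
    forall x y, pi (x + y) = pi x + pi y & forall (r : R) x, pi (r *: x) = r *: pi x].
Proof.
move=> subA complC; have [subC _ _ meet] := complC.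
have [pi piP] := complement_projection complC.
have piE x a : A a -> C (x - a) -> pi x = a.
  move=> Aa Cxa; have [Apix Cxpix] := piP x I; apply/eqP; rewrite -subr_eq0; apply/eqP.
  apply: meet; first exact: submoduleB.
  have -> : pi x - a = (x - a) - (x - pi x) by rewrite opprB [RHS]addrC addrA subrK.
  exact: submoduleB.
have Api x : A (pi x) := (piP x I).1.
have Cpi x : C (x - pi x) := (piP x I).2.
exists pi; split=> [//|a Aa|x y|r x].
- by apply: piE => //; rewrite subrr; apply: submodule0.
- by apply: piE; [apply: submoduleD | rewrite opprD addrACA; apply: submoduleD].
- by apply: piE; [apply: submoduleZ | rewrite -scalerBr; apply: submoduleZ].
Qed.

Lemma semisimple_pure A : submodule A -> pure_sub A.
Proof.
move=> subA; split => // N s sA tensor0 P beta [betaDl betaZl betaDr betaZr].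
have [C complC] := semisimple_complement subA.
have [pi [Api piK piD piZ]] := summand_projection subA complC.
(* Precomposing with the projection onto [A] extends [beta] to all of [M]. *)
have bil : bilinear_on (fun _ : M => True) (fun m n => beta (pi m) n).
  by split=> [a a' n _ _|r a n _|a n n' _|r a n _]; rewrite ?piD ?piZ; auto.
rewrite -[RHS](tensor0 P _ bil); apply: eq_big_seq => p /sA Ap /=; by rewrite piK.
Qed.

Lemma semisimple_noetherian g : (forall x, span g x) -> noetherian M.
Proof.
move=> gall B subB; have [C complC] := semisimple_complement subB.
by apply: summand_span subB (fun _ _ => I) complC _ => x; split.
Qed.

Hypothesis noethM : noetherian M.

Lemma simple_step_exists B T t : submodule B -> submodule T -> incl B T ->
  T t -> ~ B t -> exists d, T d /\ simple_step B d.
Proof.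
move=> subB subT BT Tt Bt.
pose F K := [/\ submodule K, incl B K, incl K T & exists x, T x /\ ~ K x].
have FB : F B by split => //; exists t.
have [K [[subK BK KT [t0 [Tt0 Kt0]]] maxK]] := acc_maximal (noetherian_acc noethM subB) FB.
have [D [subD DT cover meet]] := semisimple_mod_in ssM subT subK KT.
have [k [d [Kk Dd def_t0]]] := cover t0 Tt0.
have Kd : ~ K d by move=> Kd; apply: Kt0; rewrite def_t0; apply: submoduleD.
exists d; split; [exact: DT | split => [/BK //|r Brd]].
have Krd : ~ K (r *: d).
  move=> Krd; apply: Brd.
  by rewrite /ann_mod (meet _ Krd (submoduleZ subD r Dd)); apply: submodule0.
(* By maximality of [K], adding [r d] to [K] already gives all of [T]. *)
have [s [k' [Kk' def_d]]] : add_line K (r *: d) d.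
  apply: NNPP => Krdd; apply: (maxK (add_line K (r *: d))).
    split; [exact: submodule_add_line | | | exists d; split => //; exact: DT].
    - by move=> x /BK; apply: add_line_incl.
    - apply: add_line_min => //; apply: submoduleZ => //; exact: DT.
  split; [exact: submodule_add_line | exact: add_line_incl | exists (r *: d); split => //].
  exact: add_line_mem.
have k'E : k' = (1 - s * r) *: d.
  by rewrite scalerBl scale1r {1}def_d scalerA addrAC subrr add0r.
exists s; rewrite /ann_mod -k'E (meet k' Kk'); first exact: submodule0.
by rewrite k'E; apply: submoduleZ.
Qed.

Lemma semisimple_simple_steps B T : submodule B -> submodule T -> incl B T ->
  exists c, steps simple_step B c /\ forall x, T x <-> add_lines B c x.
Proof.
move=> subB subT; have accB := noetherian_acc noethM subB; move: subB.
elim: accB => {}B _ IHB subB BT.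
have [[t [Tt Bt]]|TB] := classic (exists t, T t /\ ~ B t); last first.
  exists [::]; split => // x; split => [Tx|/BT //].
  by apply: NNPP => Bx; apply: TB; exists x.
have [d [Td simple_d]] := simple_step_exists subB subT BT Tt Bt.
have subBd := submodule_add_line d subB.
have [||c [stepsc Tc]] := IHB (add_line B d) _ subBd.
- split => //; first exact: add_line_incl.
  by exists d; split; [exact: add_line_mem | case: simple_d].
- exact: add_line_min.
by exists (d :: c).
Qed.

End SemisimpleModules.

Section Series.
Variables (R : comPzRingType) (M : lmodType R).

Lemma series_semisimple : vN_regular R ->
  has_pure_comp_series_indec_cyclic M -> semisimple_mod M.
Proof.
move=> regR [n [S [S0 Sn _ _ factS]]].
have series_steps k : (k <= n)%N ->
    exists c, steps simple_or_zero_step null c /\ forall x, S k x <-> span c x.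
  elim: k => [|k IHk] ltkn; first by exists [::]; split => // x; rewrite S0.
  have [c [stepsc Sc]] := IHk (ltnW ltkn).
  have [[m [_ Sk1E]] indec] := factS k ltkn.
  rewrite (predext Sk1E : S k.+1 = add_line (S k) m) (predext Sc) in indec *.
  have [_ simple_m] := indecomposable_simple_step regR (submodule_span c) indec.
  exists (rcons c m); split; first by apply/steps_rcons.
  by move=> x; rewrite /span add_lines_rcons.
have [c [stepsc Sc]] := series_steps n (leqnn n).
by apply: (semisimple_in_full (X := span c)) (steps_semisimple regR stepsc) => x; apply/Sc.
Qed.

Lemma semisimple_series : semisimple_mod M -> fin_gen M ->
  has_pure_comp_series_indec_cyclic M.
Proof.
move=> ssM /fin_gen_span [g gall].
have [c [stepsc cE]] := semisimple_simple_steps ssM (semisimple_noetherian ssM gall)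
  (@submodule_null _ M) (@submodule_full _ M) (fun x _ => I).
exists (size c), (fun i => span (take i c)); split.
- by move=> x; rewrite take0.
- by move=> x; rewrite take_size; apply/cE.
- by move=> i _; apply/semisimple_pure/submodule_span.
- by move=> i ltic x; rewrite (take_nth 0 ltic) /span add_lines_rcons; apply: add_line_incl.
move=> i ltic; rewrite (take_nth 0 ltic) /span add_lines_rcons.
have : steps simple_step null (take i.+1 c).
  by move: stepsc; rewrite -{1}(cat_take_drop i.+1 c) steps_cat => -[].
rewrite (take_nth 0 ltic) steps_rcons => -[_ simple_i].
split; last exact: simple_step_indecomposable (submodule_span _) simple_i.
by exists (nth 0 c i); split => //; apply: add_line_mem; apply: submodule_span.
Qed.

End Series.

Section SemisimpleRing.
Variables (R : comPzRingType) (M : lmodType R).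

Lemma fin_gen_regular : fin_gen R^o.
Proof.
by exists [:: 1 : R^o] => r; exists [:: r]; split => //; rewrite big_ord1; apply/esym/mulr1.
Qed.

Lemma steps_scale (g : M) (u : seq R^o) (BR : R^o -> Prop) (BM : M -> Prop) :
  (forall r, BR r -> BM (r *: g)) -> steps simple_or_zero_step BR u ->
  steps simple_or_zero_step BM [seq a *: g | a <- u] /\
  forall r, add_lines BR u r -> add_lines BM [seq a *: g | a <- u] (r *: g).
Proof.
elim: u BR BM => [|d u IHu] BR BM BRM //= [maxd stepsu].
have BRMd r : add_line BR d r -> add_line BM (d *: g) (r *: g).
  move=> [t [y [BRy ->]]].
  by exists t, (y *: g); rewrite scalerDl scalerA; split => //; apply: BRM.
have [stepsg incg] := IHu _ _ BRMd stepsu; split=> //; split=> // r BMrdg.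
have [|s BRsrd] := maxd r; first by move=> BRrd; apply: BMrdg; rewrite /ann_mod scalerA; apply: BRM.
by exists s; rewrite /ann_mod scalerA; apply: BRM.
Qed.

Lemma steps_generators (u : seq R^o) (gs : seq M) (B : M -> Prop) :
  steps simple_or_zero_step null u -> (forall r, span u r) -> submodule B ->
  exists c, steps simple_or_zero_step B c /\ forall g, g \in gs -> add_lines B c g.
Proof.
move=> stepsu uall; elim: gs B => [|g gs IHgs] B subB; first by exists [::].
have B0g (r : R^o) : null r -> B (r *: g) by move=> ->; rewrite scale0r; apply: submodule0.
have [stepsg incg] := steps_scale B0g stepsu.
have [c [stepsc incc]] := IHgs _ (submodule_add_lines [seq a *: g | a <- u] subB).
exists ([seq a *: g | a <- u] ++ c); split; first exact/steps_cat.
move=> g'; rewrite inE add_lines_cat => /predU1P [->|/incc //].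
by apply: add_lines_incl; have := incg 1 (uall 1); rewrite scale1r.
Qed.

Lemma semisimple_ring_semisimple_mod : vN_regular R -> semisimple_ring R ->
  fin_gen M -> semisimple_mod M.
Proof.
move=> regR ssR /fin_gen_span [gs gsall].
have [g gall] := fin_gen_span fin_gen_regular.
have [u [stepsu uE]] := semisimple_simple_steps ssR (semisimple_noetherian ssR gall)
  (@submodule_null _ R^o) (@submodule_full _ R^o) (fun x _ => I).
have [c [stepsc incc]] := steps_generators gs (steps_impl (fun _ _ => @proj2 _ _) stepsu)
  (fun r => (uE r).1 I) (@submodule_null _ M).
apply: semisimple_in_full (steps_semisimple regR stepsc) => x.
exact: span_min (submodule_span _) incc x (gsall x).
Qed.

End SemisimpleRing.

Theorem proposition2p10 (R : comPzRingType) (hR : vN_regular R) :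
  (forall M : lmodType R, fin_gen M ->
     (has_pure_comp_series_indec_cyclic M <-> semisimple_mod M)) /\
  ((forall M : lmodType R, fin_gen M -> has_pure_comp_series_indec_cyclic M)
     <-> semisimple_ring R).
Proof.
have part1 (M : lmodType R) : fin_gen M ->
    has_pure_comp_series_indec_cyclic M <-> semisimple_mod M.
  by move=> fgM; split => [/(series_semisimple hR) | /semisimple_series]; apply.
split=> //; split=> [fg_series | ssR M fgM].
  exact: (part1 R^o (fin_gen_regular R)).1 (fg_series R^o (fin_gen_regular R)).
exact: (part1 M fgM).2 (semisimple_ring_semisimple_mod hR ssR fgM).
Qed.
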